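(* Let $r>1$ be real and let $d$ be a positive integer with $1\le d\le r-1$. Then $\sum_{n=d+1}^\infty n^{-r}<d^{-r}$. *)

From Stdlib Require Import Reals.
From Coquelicot Require Import Coquelicot.

(* Compare with a telescoping sum: for x > 0 and s > 0, convexity of the
   exponential gives (x+1)^-(s+1) < (x^-s - (x+1)^-s) / s, so the tail
   sum_{n > d} n^-r, with s = r - 1, is strictly below d^-s / s = d * d^-r / s,
   which is at most d^-r because d <= s. *)

From Stdlib Require Import Reals Lra Lia.
From Coquelicot Require Import Coquelicot.
Open Scope R_scope.

Lemma Rpower_gt_0 (x y : R) : 0 < Rpower x y.
Proof. unfold Rpower; apply exp_pos. Qed.

Lemma inv_succ_lt_ln_diff (x : R) : 0 < x -> / (x + 1) < ln (x + 1) - ln x.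
Proof.
  intros Hx.
  assert (Hexp : x / (x + 1) < exp (- / (x + 1))).
  { replace (x / (x + 1)) with (1 + - / (x + 1)) by (field; lra).
    apply exp_ineq1.
    assert (0 < / (x + 1)) by (apply Rinv_0_lt_compat; lra).
    lra. }
  assert (Hln : ln (x / (x + 1)) < - / (x + 1)).
  { rewrite <- (ln_exp (- / (x + 1))).
    apply ln_increasing; [apply Rdiv_lt_0_compat; lra | exact Hexp]. }
  rewrite ln_div in Hln by lra.
  lra.
Qed.

Lemma Rpower_succ_mul_lt (x s : R) : 0 < x -> 0 < s ->
  Rpower (x + 1) (- s) * (1 + s / (x + 1)) < Rpower x (- s).
Proof.
  intros Hx Hs.
  set (D := ln (x + 1) - ln x).
  assert (HD : / (x + 1) < D) by (apply inv_succ_lt_ln_diff; exact Hx).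
  assert (Hsplit : Rpower x (- s) = Rpower (x + 1) (- s) * exp (s * D)).
  { unfold Rpower, D; rewrite <- exp_plus; f_equal; ring. }
  assert (Hgrowth : 1 + s / (x + 1) < exp (s * D)).
  { apply Rlt_trans with (1 + s * D).
    - unfold Rdiv; apply Rplus_lt_compat_l, Rmult_lt_compat_l; assumption.
    - apply exp_ineq1.
      assert (0 < / (x + 1)) by (apply Rinv_0_lt_compat; lra).
      nra. }
  rewrite Hsplit.
  apply Rmult_lt_compat_l; [apply Rpower_gt_0 | exact Hgrowth].
Qed.

Lemma Rpower_succ_opp_lt_diff (x s : R) : 0 < x -> 0 < s ->
  Rpower (x + 1) (- (s + 1)) < Rpower x (- s) / s - Rpower (x + 1) (- s) / s.
Proof.
  intros Hx Hs.
  pose proof (Rpower_succ_mul_lt x s Hx Hs) as Hmul.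
  assert (Hsucc : Rpower (x + 1) (- (s + 1)) = Rpower (x + 1) (- s) / (x + 1)).
  { replace (- (s + 1)) with (- s + Ropp 1) by ring.
    rewrite Rpower_plus, (Rpower_Ropp _ 1), Rpower_1 by lra.
    reflexivity. }
  rewrite Hsucc.
  apply Rmult_lt_reg_r with s; [exact Hs |].
  replace ((Rpower x (- s) / s - Rpower (x + 1) (- s) / s) * s)
    with (Rpower x (- s) - Rpower (x + 1) (- s)) by (field; lra).
  replace (Rpower (x + 1) (- s) / (x + 1) * s)
    with (Rpower (x + 1) (- s) * (1 + s / (x + 1)) - Rpower (x + 1) (- s))
    by (field; lra).
  lra.
Qed.

Lemma Rpower_opp_div_le (x s : R) : 0 < x -> x <= s ->
  Rpower x (- s) / s <= Rpower x (- (s + 1)).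
Proof.
  intros Hx Hxs.
  replace (- s) with (1 + - (s + 1)) by ring.
  rewrite Rpower_plus, Rpower_1 by exact Hx.
  pose proof (Rpower_gt_0 x (- (s + 1))) as Hpos.
  apply Rmult_le_reg_r with s; [lra |].
  replace (x * Rpower x (- (s + 1)) / s * s) with (x * Rpower x (- (s + 1)))
    by (field; lra).
  rewrite Rmult_comm.
  apply Rmult_le_compat_l; lra.
Qed.

Lemma telescoping_series_lt (a g : nat -> R) :
  (forall k, 0 <= a k) -> (forall k, 0 <= g k) ->
  (forall k, a k < g k - g (S k)) ->
  ex_series a /\ Series a < g O.
Proof.
  intros Ha Hg Hag.
  (* The gap at k = 0 survives in every partial sum. *)
  set (gap := g O - g 1%nat - a O).
  assert (Hgap : 0 < gap) by (specialize (Hag O); unfold gap; lra).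
  assert (Hpartial : forall N, sum_n a N <= g O - g (S N) - gap).
  { induction N as [| N IH].
    - rewrite sum_O; unfold gap; lra.
    - rewrite sum_Sn; unfold plus; simpl.
      specialize (Hag (S N)); lra. }
  assert (Hbound : forall N, sum_n a N <= g O - gap).
  { intro N; specialize (Hpartial N); specialize (Hg (S N)); lra. }
  assert (Hex : ex_series a).
  { destruct (ex_finite_lim_seq_incr (sum_n a) (g O - gap)) as [l Hl].
    - intro N; rewrite sum_Sn; unfold plus; simpl; specialize (Ha (S N)); lra.
    - exact Hbound.
    - exists l; exact Hl. }
  split; [exact Hex |].
  destruct Hex as [l Hl].
  rewrite (is_series_unique a l Hl).
  pose proof (is_lim_seq_le (sum_n a) (fun _ => g O - gap) l (g O - gap)
                Hbound Hl (is_lim_seq_const _)) as Hle.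
  simpl in Hle; lra.
Qed.

Theorem mainTheorem12 (r : R) (d : nat) (hr : 1 < r) (hd1 : (1 <= d)%nat)
  (hdr : INR d <= r - 1) :
  ex_series (fun k : nat => Rpower (INR (k + d + 1)) (- r)) /\
  Series (fun k : nat => Rpower (INR (k + d + 1)) (- r)) < Rpower (INR d) (- r).
Proof.
  set (s := r - 1).
  assert (Hs : 0 < s) by (unfold s; lra).
  assert (Hd : 0 < INR d) by (apply lt_0_INR; lia).
  replace (- r) with (- (s + 1)) by (unfold s; ring).
  pose proof (Rpower_opp_div_le (INR d) s Hd hdr) as Hg0.
  destruct (telescoping_series_lt
              (fun k => Rpower (INR (k + d + 1)) (- (s + 1)))
              (fun k => Rpower (INR (k + d)) (- s) / s)) as [Hex Hlt].
  - intro k; apply Rlt_le, Rpower_gt_0.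
  - intro k; apply Rlt_le, Rdiv_lt_0_compat; [apply Rpower_gt_0 | exact Hs].
  - intro k.
    replace (S k + d)%nat with (k + d + 1)%nat by lia.
    rewrite plus_INR, INR_1.
    apply Rpower_succ_opp_lt_diff; [apply lt_0_INR; lia | exact Hs].
  - split; [exact Hex |].
    simpl in Hlt; lra.
Qed.
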